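(* A vector $v=(v_{i,j})\in E$ belongs to $Q_{\min}^\star$ if and only if $\sum_{(i,j)\in I}v_{i,j}=0$ and $\sum_{(i,j)\in I_s}v_{i,j}\le0$ for every $s\in\{1,\dots,d\}$. A vector $v\in E$ belongs to $Q_{\max}^\star$ if and only if $\sum_{(i,j)\in I}v_{i,j}=0$ and $\sum_{(i,j)\in J}v_{i,j}\le0$ for every admissible subset $J\subset I$.
   Context: Let $d\ge1$, $I=\{(i,j)\in\mathbb{Z}^2:1\le i\le j\le d\}$, $E=\mathbb{R}^I$ with scalar product $\langle v|w\rangle_E=\sum_{(i,j)\in I}v_{i,j}w_{i,j}$. $Q_{\max}\subset E$ is the cone of $q=(q_{i,j})$ with $q_{i,j}\ge q_{i,j+1}$ and $q_{i,j}\le q_{i+1,j+1}$ for all $1\le i\le j<d$; $Q_{\min}\subset E$ is the cone of $q$ with $q_{i,j}\ge q_{i,j+1}$ and $q_{i,j}=q_{i+1,j+1}$ for all $1\le i\le j<d$. For a cone $P\subset E$, $P^\star=\{v\in E:\langle v|x\rangle_E\ge0\ \forall x\in P\}$. A subset $J\subset I$ is admissible if for every $(i,j)\in J$, the pairs $(i,j+1)$ and $(i-1,j-1)$ belong to $J$ whenever they belong to $I$. For $s\in\{1,\dots,d\}$, $I_s=\{(i,j)\in I: j-i\ge d-s\}$. *)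

From HB Require Import structures.
From mathcomp Require Import all_boot all_order all_algebra.
Set Implicit Arguments. Unset Strict Implicit. Unset Printing Implicit Defensive.
Import Order.TTheory GRing.Theory Num.Theory.
Local Open Scope ring_scope.

(* Indices are 1-based as in the paper: I = {(i,j) : 1 <= i <= j <= d}.
   An element of E = R^I is represented by a function v : nat -> nat -> R;
   only its values on I are ever used (scalar product, sums, cone conditions). *)

Definition inI (d i j : nat) : bool := [&& (1 <= i)%N, (i <= j)%N & (j <= d)%N].

Definition sumI {R : realFieldType} (d : nat) (F : nat -> nat -> R) : R :=
  \sum_(1 <= i < d.+1) \sum_(i <= j < d.+1) F i j.

Definition dotE {R : realFieldType} (d : nat) (v w : nat -> nat -> R) : R :=
  sumI d (fun i j => v i j * w i j).

Definition Qmax {R : realFieldType} (d : nat) (q : nat -> nat -> R) : Prop :=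
  forall i j : nat, (1 <= i)%N -> (i <= j)%N -> (j < d)%N ->
    q i j.+1 <= q i j /\ q i j <= q i.+1 j.+1.

Definition Qmin {R : realFieldType} (d : nat) (q : nat -> nat -> R) : Prop :=
  forall i j : nat, (1 <= i)%N -> (i <= j)%N -> (j < d)%N ->
    q i j.+1 <= q i j /\ q i j = q i.+1 j.+1.

Definition dual_cone {R : realFieldType} (d : nat)
  (P : (nat -> nat -> R) -> Prop) (v : nat -> nat -> R) : Prop :=
  forall x, P x -> 0 <= dotE d v x.

Definition subI (d : nat) (J : nat -> nat -> bool) : Prop :=
  forall i j, J i j -> inI d i j.

Definition admissible (d : nat) (J : nat -> nat -> bool) : Prop :=
  forall i j, J i j ->
    (inI d i j.+1 -> J i j.+1) /\ (inI d i.-1 j.-1 -> J i.-1 j.-1).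

Definition sumJ {R : realFieldType} (d : nat) (J : nat -> nat -> bool)
  (v : nat -> nat -> R) : R :=
  sumI d (fun i j => if J i j then v i j else 0).

Definition Is (d s i j : nat) : bool := (d - s <= j - i)%N.

From HB Require Import structures.
From mathcomp Require Import all_boot all_order all_algebra.
From mathcomp Require Import zify lra.
Import Order.TTheory GRing.Theory Num.Theory.
Local Open Scope ring_scope.

(* Layer-cake (Abel) summation along the values of [q] sorted decreasingly
   writes [<v|q>] as [max q * sum v] minus a nonnegative combination of the
   sums of [v] over the sublevel sets [{q <= m}].  For [q] in Q_max these sets
   are admissible; for [q] in Q_min, which depends only on [j - i] and
   decreases with it, they are the sets I_s or empty.  Conversely the constants
   [1], [-1] and the negated indicators of admissible sets (resp. of the I_s)
   lie in Q_max (resp. Q_min). *)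

Section LayerCake.
Variables (R : realFieldType) (X : eqType) (q v : X -> R).

Let geq_q_trans : transitive (fun x y => q y <= q x).
Proof. by move=> y x z le_yx le_zy; apply: le_trans le_zy le_yx. Qed.

Lemma sorted_sum_mul_ge (s : seq X) (M : R) :
  sorted (fun x y => q y <= q x) s -> all (fun x => q x <= M) s ->
  (forall m, m < M -> \sum_(x <- s | q x <= m) v x <= 0) ->
  M * \sum_(x <- s) v x <= \sum_(x <- s) v x * q x.
Proof.
elim: s M => [|y s IHs] M /=; first by rewrite !big_nil mulr0.
move=> sorted_ys /andP[qyM _] sublevel_le0.
have s_le_y : all (fun x => q x <= q y) s.
  exact: order_path_min geq_q_trans sorted_ys.
have IH : q y * \sum_(x <- s) v x <= \sum_(x <- s) v x * q x.
  apply: IHs (path_sorted sorted_ys) s_le_y _ => m lt_m_qy.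
  have := sublevel_le0 m (lt_le_trans lt_m_qy qyM).
  by rewrite big_cons (leNgt (q y)) lt_m_qy.
have top_le0 : (M - q y) * (v y + \sum_(x <- s) v x) <= 0.
  have [lt_qy_M | ge_qy_M] := ltP (q y) M; last first.
    have -> : M = q y by apply/le_anti; rewrite ge_qy_M qyM.
    by rewrite subrr mul0r.
  have := sublevel_le0 _ lt_qy_M.
  rewrite big_cons lexx -big_filter (all_filterP s_le_y) => sum_le0.
  by rewrite mulr_ge0_le0 // subr_ge0 ltW.
rewrite !big_cons; nra.
Qed.

Lemma sum_mul_ge0_of_sublevel (s : seq X) :
  \sum_(x <- s) v x = 0 -> (forall m, \sum_(x <- s | q x <= m) v x <= 0) ->
  0 <= \sum_(x <- s) v x * q x.
Proof.
move=> sum0 sublevel_le0.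
pose geq_q := fun x y => q y <= q x.
have perm_s : perm_eq (sort geq_q s) s by rewrite perm_sort.
rewrite -(perm_big _ perm_s); rewrite -(perm_big _ perm_s) in sum0.
have sorted_s : sorted geq_q (sort geq_q s).
  by apply: sort_sorted => x y; apply: le_total.
case: (sort geq_q s) sorted_s sum0 perm_s => [|y r] sorted_yr sum0 perm_yr.
  by rewrite big_nil.
rewrite -[leLHS](mulr0 (q y)) -[X in _ * X]sum0.
apply: sorted_sum_mul_ge => //=.
- by rewrite lexx (order_path_min geq_q_trans sorted_yr).
- by move=> m _; rewrite (perm_big _ perm_yr).
Qed.

End LayerCake.

Section SumsOverI.
Variables (R : realFieldType) (d : nat).
Implicit Types (F G v q : nat -> nat -> R) (J : nat -> nat -> bool).

Definition pairsI : seq (nat * nat) :=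
  [seq (i, j) | i <- index_iota 1 d.+1, j <- index_iota i d.+1].

Lemma sumI_pairsI F : sumI d F = \sum_(p <- pairsI) F p.1 p.2.
Proof. by rewrite big_allpairs_dep. Qed.

Lemma eq_sumI F G : (forall i j, inI d i j -> F i j = G i j) -> sumI d F = sumI d G.
Proof.
move=> eqFG; apply: eq_big_nat => i /andP[i_ge1 i_le_d].
apply: eq_big_nat => j /andP[le_ij j_le_d]; apply: eqFG.
by rewrite /inI i_ge1 le_ij -ltnS.
Qed.

Lemma eq_sumJ J J' v : (forall i j, inI d i j -> J i j = J' i j) ->
  sumJ d J v = sumJ d J' v.
Proof. by move=> eqJ; apply: eq_sumI => i j /eqJ ->. Qed.

Lemma sumJ_pred0 J v : (forall i j, inI d i j -> ~~ J i j) -> sumJ d J v = 0.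
Proof.
move=> J0; rewrite /sumJ (@eq_sumI _ (fun _ _ => 0)) => [|i j /J0/negbTE -> //].
by rewrite sumI_pairsI big1.
Qed.

Lemma dotE_const v (c : R) : dotE d v (fun _ _ => c) = c * sumI d v.
Proof. by rewrite /dotE !sumI_pairsI mulr_sumr; apply: eq_bigr => p _; rewrite mulrC. Qed.

Definition neg_indicator J : nat -> nat -> R := fun i j => if J i j then -1 else 0.

Lemma dotE_neg_indicator v J : dotE d v (neg_indicator J) = - sumJ d J v.
Proof.
rewrite /dotE /sumJ !sumI_pairsI -sumrN; apply: eq_bigr => p _.
by rewrite /neg_indicator; case: (J _ _); rewrite ?mulrN1 ?mulr0 ?oppr0.
Qed.

Lemma dual_cone_sumI_eq0 (P : (nat -> nat -> R) -> Prop) v :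
  P (fun _ _ => 1) -> P (fun _ _ => -1) -> dual_cone d P v -> sumI d v = 0.
Proof.
move=> P1 PN1 v_dual; have := v_dual _ P1; have := v_dual _ PN1.
rewrite !dotE_const mul1r mulN1r oppr_ge0 => sum_le0 sum_ge0.
by apply/le_anti; rewrite sum_le0 sum_ge0.
Qed.

Lemma dual_cone_neg_indicator (P : (nat -> nat -> R) -> Prop) v J :
  P (neg_indicator J) -> dual_cone d P v -> sumJ d J v <= 0.
Proof. by move=> PJ /(_ _ PJ); rewrite dotE_neg_indicator oppr_ge0. Qed.

Lemma dotE_ge0_of_sublevel v q : sumI d v = 0 ->
  (forall m, sumJ d (fun i j => q i j <= m) v <= 0) -> 0 <= dotE d v q.
Proof.
move=> sum0 sublevel_le0; rewrite /dotE sumI_pairsI.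
apply: (@sum_mul_ge0_of_sublevel _ _ (fun p => q p.1 p.2)) => [|m].
  by rewrite -sumI_pairsI.
by rewrite big_mkcond; have := sublevel_le0 m; rewrite /sumJ sumI_pairsI.
Qed.

End SumsOverI.

Lemma nonincreasing_sublevel_suffix (R : realFieldType) (n : nat) (f : nat -> R) (m : R) :
  (forall a b, (a <= b < n)%N -> f b <= f a) ->
  exists2 k0, (k0 <= n)%N & forall k, (k < n)%N -> (f k <= m) = (k0 <= k)%N.
Proof.
move=> f_noninc.
have has_bound : exists k, (f k <= m) || (n <= k)%N by exists n; rewrite leqnn orbT.
case: (ex_minnP has_bound) => k0 k0_bound k0_min.
exists k0; first by apply: k0_min; rewrite leqnn orbT.
move=> k lt_kn; apply/idP/idP => [fk_le | le_k0k]; first by apply: k0_min; rewrite fk_le.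
have lt_k0n : (k0 < n)%N by apply: leq_ltn_trans le_k0k lt_kn.
move: k0_bound; rewrite leqNgt lt_k0n orbF => fk0_le.
by apply: le_trans fk0_le; apply: f_noninc; rewrite le_k0k.
Qed.

Section ConeQmin.
Variables (R : realFieldType) (d : nat).

Lemma Qmin_neg_indicator_Is s : Qmin d (neg_indicator R (Is d s)).
Proof.
move=> i j _ _ _; rewrite /neg_indicator /Is subSS; split=> //.
have [le_ij | _] := leqP (d - s) (j - i); last by case: ifP; rewrite ?lerN10.
by rewrite (leq_trans le_ij) // leq_sub2r.
Qed.

Variables (q : nat -> nat -> R).
Hypothesis q_Qmin : Qmin d q.

Lemma Qmin_diag i j : inI d i j -> q i j = q 1%N (j - i).+1.
Proof.
elim: i j => [|i IHi] j /and3P[i_ge1 le_ij j_le_d]; first by [].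
case: i IHi i_ge1 le_ij => [|i] IHi _ le_ij; first by rewrite subn1 prednK.
have [_ diag] := q_Qmin i.+1 j.-1 isT ltac:(lia) ltac:(lia).
rewrite -[in LHS](@prednK j) -?diag ?IHi; try lia.
  by congr (q _ _.+1); lia.
by rewrite /inI; apply/and3P; split; lia.
Qed.

Lemma Qmin_nonincreasing a b : (a <= b < d)%N -> q 1%N b.+1 <= q 1%N a.+1.
Proof.
move=> /andP[le_ab lt_bd].
have step k : (k.+1 < d)%N -> q 1%N k.+2 <= q 1%N k.+1.
  by move=> lt_kd; have [] := q_Qmin 1%N k.+1 isT isT lt_kd.
pose D := [pred k | (k < d)%N].
have := @homo_leq_in _ D (fun k => q 1%N k.+1) (fun x y => y <= x).
apply=> //; first by move=> y x z le_yx le_zy; apply: le_trans le_zy le_yx.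
- move=> i j _; rewrite inE => lt_jd k /andP[_ lt_kj]; rewrite inE; lia.
- by move=> i _; apply: step.
- by rewrite inE (leq_ltn_trans le_ab lt_bd).
Qed.

Lemma Qmin_sublevel m :
  exists2 k0, (k0 <= d)%N & forall i j, inI d i j -> (q i j <= m) = (k0 <= j - i)%N.
Proof.
have [k0 k0_le_d sublevel] :=
  @nonincreasing_sublevel_suffix _ _ _ m Qmin_nonincreasing.
exists k0 => // i j ij_inI; rewrite Qmin_diag // sublevel //.
by move/and3P: ij_inI => [? ? ?]; lia.
Qed.

Lemma Qmin_sumJ_sublevel_le0 (v : nat -> nat -> R) m :
  (forall s, (1 <= s)%N -> (s <= d)%N -> sumJ d (Is d s) v <= 0) ->
  sumJ d (fun i j => q i j <= m) v <= 0.
Proof.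
move=> Is_le0; have [k0 k0_le_d sublevel] := Qmin_sublevel m.
have [k0_eq_d | lt_k0d] := eqVneq k0 d.
  rewrite sumJ_pred0 // => i j /[dup] /sublevel ->.
  by move/and3P=> [? ? ?]; lia.
rewrite (@eq_sumJ _ _ _ (Is d (d - k0))) ?Is_le0 //; try lia.
by move=> i j /sublevel ->; rewrite /Is subKn.
Qed.

End ConeQmin.

Section ConeQmax.
Variables (R : realFieldType) (d : nat).

Lemma Qmax_neg_indicator J : admissible d J -> Qmax d (neg_indicator R J).
Proof.
move=> J_adm i j i_ge1 le_ij lt_jd; rewrite /neg_indicator.
have inI_ij : inI d i j by rewrite /inI i_ge1 le_ij ltnW.
have inI_ijS : inI d i j.+1 by rewrite /inI i_ge1 (leq_trans le_ij) /=.
case Jij: (J i j).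
  by have [/(_ inI_ijS) -> _] := J_adm i j Jij; rewrite lexx; case: ifP; rewrite ?lerN10.
case JSS: (J i.+1 j.+1); last by case: ifP; rewrite ?lerN10.
by have [_ /(_ inI_ij)] := J_adm _ _ JSS; rewrite /= Jij.
Qed.

Lemma Qmax_sublevel_admissible (q : nat -> nat -> R) m :
  Qmax d q -> admissible d (fun i j => inI d i j && (q i j <= m)).
Proof.
move=> q_Qmax i j /andP[/and3P[i_ge1 le_ij j_le_d] le_qm]; split=> /[dup] inI' ->.
  have [le_next _] := q_Qmax i j i_ge1 le_ij ltac:(move/and3P: inI' => [_ _ ?]; lia).
  exact: le_trans le_next le_qm.
move/and3P: inI' => [? ? ?].
have [_ le_prev] := q_Qmax i.-1 j.-1 ltac:(lia) ltac:(lia) ltac:(lia).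
by apply: le_trans le_qm; rewrite !prednK in le_prev; try lia.
Qed.

End ConeQmax.

Theorem proposition2p4 (R : realFieldType) (d : nat) (hd : (1 <= d)%N) :
  (forall v : nat -> nat -> R,
     dual_cone d (@Qmin R d) v <->
     (sumI d v = 0 /\
      forall s : nat, (1 <= s)%N -> (s <= d)%N ->
        sumJ d (Is d s) v <= 0)) /\
  (forall v : nat -> nat -> R,
     dual_cone d (@Qmax R d) v <->
     (sumI d v = 0 /\
      forall J : nat -> nat -> bool, subI d J -> admissible d J ->
        sumJ d J v <= 0)).
Proof.
split=> v; split.
- move=> v_dual; split; first by apply: dual_cone_sumI_eq0 v_dual.
  by move=> s _ _; apply: dual_cone_neg_indicator v_dual; apply: Qmin_neg_indicator_Is.
- move=> [sum0 Is_le0] q q_Qmin; apply: dotE_ge0_of_sublevel sum0 _ => m.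
  exact: Qmin_sumJ_sublevel_le0.
- move=> v_dual; split; first by apply: dual_cone_sumI_eq0 v_dual.
  by move=> J _ J_adm; apply: dual_cone_neg_indicator v_dual; apply: Qmax_neg_indicator.
- move=> [sum0 adm_le0] q q_Qmax; apply: dotE_ge0_of_sublevel sum0 _ => m.
  rewrite (@eq_sumJ _ _ _ (fun i j => inI d i j && (q i j <= m))) => [|i j ->] //.
  apply: adm_le0; last exact: Qmax_sublevel_admissible.
  by move=> i j /andP[].
Qed.
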